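(* Let $A_1,\dots,A_m\in\mathrm{Pos}(\mathcal X)$ and $\alpha_1,\dots,\alpha_m\in\mathbb R\cup\{-\infty\}$, and let $\ell:\mathrm{Herm}(\mathcal X)\to\overline{\mathbb R}$ be extended linear with $\ell(\rho)=\sum_{i=1}^m\langle A_i,\rho\rangle\alpha_i$ for all $\rho\in\mathrm{Dens}(\mathcal X)$. Then there exists an extended Hermitian matrix $E=A-\infty B\in\overline{\mathrm{Herm}}(\mathcal X)$ such that $\ell(\rho)=\langle E,\rho\rangle$ for all $\rho\in\mathrm{Dens}(\mathcal X)$.
   Context: $\mathcal X=\mathbb C^n$; $\mathrm{Herm}(\mathcal X)$ Hermitian matrices, $\langle X,Y\rangle=\mathrm{Tr}(X^*Y)$; $\mathrm{Pos}(\mathcal X)$ positive semidefinite; $\mathrm{Dens}(\mathcal X)$ density matrices. $\overline{\mathbb R}=\mathbb R\cup\{\pm\infty\}$ with $0\cdot(-\infty)=0$ and $c\cdot(-\infty)=-\infty$ for $c>0$. An extended linear function $\ell$ satisfies $\ell(\alpha v)=\alpha\ell(v)$ for real $\alpha$ and $\ell(v+v')=\ell(v)+\ell(v')$ whenever $\{\ell(v),\ell(v')\}\ne\{\infty,-\infty\}$. $\overline{\mathrm{Herm}}(\mathcal X)$ is the set of formal expressions $A-\infty B$ with $A\in\mathrm{Herm}(\mathcal X)$, $B\in\mathrm{Pos}(\mathcal X)$, $AB=0$, acting by $\langle A-\infty B,X\rangle=\langle A,X\rangle-\infty\langle B,X\rangle$. *)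

From mathcomp Require Import all_boot all_order all_algebra.
From mathcomp Require Import complex.
From mathcomp Require Import all_classical all_reals ereal.
Set Implicit Arguments. Unset Strict Implicit. Unset Printing Implicit Defensive.
Import Order.TTheory GRing.Theory Num.Theory.
Local Open Scope ring_scope.

Definition adjmx (R : realType) (p q : nat) (X : 'M[R[i]]_(p, q)) : 'M[R[i]]_(q, p) :=
  (map_mx (@conjc R) X)^T.

Definition herm (R : realType) (n : nat) (X : 'M[R[i]]_n) : Prop := adjmx X = X.

Definition psd (R : realType) (n : nat) (X : 'M[R[i]]_n) : Prop :=
  herm X /\ forall v : 'cV[R[i]]_n, 0 <= (adjmx v *m X *m v) 0 0.

Definition dens (R : realType) (n : nat) (X : 'M[R[i]]_n) : Prop :=
  psd X /\ \tr X = 1.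

(* <X, Y> = Tr(X^* Y); real for Hermitian X, Y, so we take its real part *)
Definition hip (R : realType) (n : nat) (X Y : 'M[R[i]]_n) : R :=
  complex.Re (\tr (adjmx X *m Y)).

(* extended linear function on Herm(X) (l is only constrained on Hermitian arguments) *)
Definition ext_linear (R : realType) (n : nat) (l : 'M[R[i]]_n -> \bar R) : Prop :=
  (forall (a : R) (v : 'M[R[i]]_n), herm v -> l ((a%:C)%C *: v) = (a%:E * l v)%E) /\
  (forall v w : 'M[R[i]]_n, herm v -> herm w ->
     ~ ((l v = +oo%E /\ l w = -oo%E) \/ (l v = -oo%E /\ l w = +oo%E)) ->
     l (v + w) = (l v + l w)%E).

(* pairing of the extended Hermitian matrix A - oo B with X:
   <A,X> - oo <B,X>, with the convention 0 * (-oo) = 0 *)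
Definition ehpair (R : realType) (n : nat) (A B X : 'M[R[i]]_n) : \bar R :=
  ((hip A X)%:E + (-oo) * (hip B X)%:E)%E.

From mathcomp Require Import all_boot all_order all_algebra.
From mathcomp Require Import complex.
From mathcomp Require Import all_classical all_reals ereal.
From mathcomp Require Import sesquilinear spectral.
Set Implicit Arguments. Unset Strict Implicit. Unset Printing Implicit Defensive.
Import Order.TTheory GRing.Theory Num.Theory.
Local Open Scope ring_scope.

(* The weights split into a finite part, giving the Hermitian matrix
   A0 = sum_(alpha_i > -oo) alpha_i A_i, and an infinite part, giving the
   positive semidefinite B = sum_(alpha_i = -oo) A_i.  Since every <A_i, rho>
   is nonnegative, the sum defining l(rho) is <A0, rho> - oo <B, rho>.  To
   achieve A B = 0, replace A0 by its compression Q A0 Q to ker B: if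
   <B, rho> = 0 then rho is supported in ker B, so the compression does not
   change <A0, rho>, and if <B, rho> > 0 both pairings are -oo anyway. *)

Lemma sum_mule_fineNy (R : realDomainType) (I : finType) (h : I -> R) (a : I -> \bar R) :
  (forall i, 0 <= h i) -> (forall i, a i != +oo%E) ->
  (\sum_i (h i)%:E * a i =
   (\sum_i fine (a i) * h i)%:E + -oo * (\sum_(i | a i == -oo%E) h i)%:E)%E.
Proof.
move=> h_ge0 a_fin.
have : 0 <= \sum_(i | a i == -oo%E) h i by apply: sumr_ge0.
rewrite le_eqVlt => /orP[/eqP/esym hNy0 | hNy_gt0].
  have h0 i : a i == -oo%E -> h i = 0 by apply: (psumr_eq0P _ hNy0) => j _.
  rewrite hNy0 mule0 adde0 -sumEFin; apply: eq_bigr => i _.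
  move: (a_fin i) (h0 i); case: (a i) => [r _ _| // | _ ->//].
    by rewrite -EFinM mulrC.
  by rewrite mul0e mulr0.
have [j /andP[aj hj]] : exists j, (a j == -oo%E) && (0 < h j).
  apply/existsP; apply: contraLR hNy_gt0 => /existsPn hle0.
  rewrite -leNgt; apply: sumr_le0 => i ai.
  by move: (hle0 i); rewrite ai /= leNgt.
rewrite gt0_mulNye ?lte_fin // addeNy; apply/esum_eqNyP.
by exists j; rewrite mem_index_enum (eqP aj) gt0_muleNy ?lte_fin.
Qed.

Section ExtendedHermitian.
Variable R : realType.
Local Notation C := R[i].
Local Open Scope sesquilinear_scope.

Lemma adjmxE p q (X : 'M[C]_(p, q)) : adjmx X = X ^t*.
Proof. by rewrite /adjmx map_trmx. Qed.

Lemma adjmxK p q (X : 'M[C]_(p, q)) : adjmx (adjmx X) = X.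
Proof. by rewrite !adjmxE trmxCK. Qed.

Lemma adjmxM p q r (X : 'M[C]_(p, q)) (Y : 'M[C]_(q, r)) :
  adjmx (X *m Y) = adjmx Y *m adjmx X.
Proof. by rewrite !adjmxE trmx_mul map_mxM. Qed.

Lemma adjmxD p q (X Y : 'M[C]_(p, q)) : adjmx (X + Y) = adjmx X + adjmx Y.
Proof. by apply/matrixP=> a b; rewrite !mxE rmorphD. Qed.

Lemma adjmx0 p q : adjmx (0 : 'M[C]_(p, q)) = 0.
Proof. by apply/matrixP=> a b; rewrite !mxE rmorph0. Qed.

Lemma adjmxZ p q (c : R) (X : 'M[C]_(p, q)) : adjmx (c%:C%C *: X) = c%:C%C *: adjmx X.
Proof.
apply/matrixP=> a b; rewrite !mxE rmorphM; congr (_ * _).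
by rewrite /= oppr0.
Qed.

Lemma adjmx_delta p q (i : 'I_p) (j : 'I_q) :
  adjmx (delta_mx i j : 'M[C]_(p, q)) = delta_mx j i.
Proof.
apply/matrixP=> a b; rewrite !mxE.
by rewrite (rmorph_nat (@conjc R) ((b == i) && (a == j))) andbC.
Qed.

Lemma adjmx_diag p (d : 'rV[C]_p) : (forall j, (d 0 j)^* = d 0 j) ->
  adjmx (diag_mx d) = diag_mx d.
Proof.
move=> d_real; apply/matrixP=> a b; rewrite !mxE eq_sym.
by case: eqP => [->|_]; rewrite ?mulr1n ?mulr0n; [exact: d_real | exact: conjC0].
Qed.

Lemma herm_sum n (I : Type) (r : seq I) (P : pred I) (F : I -> 'M[C]_n) :
  (forall i, P i -> herm (F i)) -> herm (\sum_(i <- r | P i) F i).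
Proof.
move=> hF; apply: (big_ind (@herm R n)) => //; first exact: adjmx0.
by move=> X Y hX hY; rewrite /herm adjmxD hX hY.
Qed.

Lemma psd_sum n (I : Type) (r : seq I) (P : pred I) (F : I -> 'M[C]_n) :
  (forall i, P i -> psd (F i)) -> psd (\sum_(i <- r | P i) F i).
Proof.
move=> hF; apply: (big_ind (@psd R n)) => //.
  by split=> [|v]; [exact: adjmx0 | rewrite mulmx0 mul0mx mxE].
move=> X Y [hX qX] [hY qY]; split; first by rewrite /herm adjmxD hX hY.
by move=> v; rewrite mulmxDr mulmxDl mxE addr_ge0.
Qed.

Lemma hermZ n (c : R) (X : 'M[C]_n) : herm X -> herm (c%:C%C *: X).
Proof. by rewrite /herm adjmxZ => ->. Qed.

Lemma herm_compress n (Q A : 'M[C]_n) : herm Q -> herm A -> herm (Q *m A *m Q).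
Proof. by move=> hQ hA; rewrite /herm !adjmxM hQ hA mulmxA. Qed.

Lemma quad_adj_delta n (P X : 'M[C]_n) j :
  let v := adjmx P *m delta_mx j (0 : 'I_1) in
  (adjmx v *m X *m v) 0 0 = (P *m X *m adjmx P) j j.
Proof.
rewrite /= adjmxM adjmxK adjmx_delta !mulmxA -rowE -mulmxA -colE !mxE.
by apply: eq_bigr => k _; rewrite -row_mul !mxE.
Qed.

Lemma psd_spectral n (X : 'M[C]_n) : psd X ->
  exists (P : 'M[C]_n) (d : 'rV[C]_n),
    [/\ P *m adjmx P = 1%:M, adjmx P *m P = 1%:M,
        X = adjmx P *m diag_mx d *m P & forall j, 0 <= d 0 j].
Proof.
move=> [hX qX].
have /orthomx_spectralP : X \is normalmx by apply/normalmxP; rewrite -adjmxE hX.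
set P := spectralmx X; set d := spectral_diag X.
have P_unitary : P \is unitarymx by apply: spectral_unitarymx.
rewrite invmx_unitary // -adjmxE => XE.
have PPadj : P *m adjmx P = 1%:M by rewrite adjmxE; apply/unitarymxP.
have PadjP : adjmx P *m P = 1%:M.
  by rewrite adjmxE -invmx_unitary // mulVmx // spectral_unit.
exists P, d; split => // j; have := qX (adjmx P *m delta_mx j 0).
by rewrite quad_adj_delta XE !mulmxA PPadj mul1mx -mulmxA PPadj mulmx1 mxE eqxx.
Qed.

Lemma mxtrace_mul_spectral n (A P : 'M[C]_n) d :
  \tr (A *m (adjmx P *m diag_mx d *m P)) = \sum_j d 0 j * (P *m A *m adjmx P) j j.
Proof.
rewrite !mulmxA mxtrace_mulC !mulmxA; apply: eq_bigr => j _.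
by rewrite mul_mx_diag mxE mulrC.
Qed.

Lemma psd_quad_eq0 n (X : 'M[C]_n) (v : 'cV[C]_n) :
  psd X -> (adjmx v *m X *m v) 0 0 = 0 -> X *m v = 0.
Proof.
move=> /psd_spectral[P [d [_ _ -> d_ge0]]].
have -> : (adjmx v *m (adjmx P *m diag_mx d *m P) *m v) 0 0 =
          \sum_j d 0 j * ((P *m v) j 0 * ((P *m v) j 0)^*).
  rewrite !mulmxA -adjmxM -(mulmxA _ P v) mxE; apply: eq_bigr => j _.
  by rewrite mul_mx_diag !mxE mulrAC mulrC [X in _ * X]mulrC.
move=> hsum; rewrite -!mulmxA.
suff -> : diag_mx d *m (P *m v) = 0 by rewrite mulmx0.
apply/matrixP=> a b; rewrite ord1 mul_diag_mx [in LHS]mxE [RHS]mxE.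
have /eqP : d 0 a * ((P *m v) a 0 * ((P *m v) a 0)^*) = 0.
  by apply: (psumr_eq0P _ hsum) => // j _; rewrite mulr_ge0 ?mul_conjC_ge0.
by rewrite mulf_eq0 mul_conjC_eq0 => /orP[] /eqP ->; rewrite ?mul0r ?mulr0.
Qed.

Lemma mxtrace_psd_mul_ge0 n (A B : 'M[C]_n) : psd A -> psd B -> 0 <= \tr (A *m B).
Proof.
move=> [_ qA] /psd_spectral[P [d [_ _ -> d_ge0]]].
rewrite mxtrace_mul_spectral; apply: sumr_ge0 => j _.
by rewrite mulr_ge0 // -quad_adj_delta.
Qed.

(* Q is the orthogonal projector onto ker B: in an eigenbasis of B it keeps
   exactly the coordinates where the eigenvalue vanishes. *)
Lemma psd_kernel_projector n (B : 'M[C]_n) : psd B ->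
  exists Q : 'M[C]_n,
    [/\ herm Q, Q *m B = 0 &
        forall rho, psd rho -> \tr (B *m rho) = 0 -> rho *m Q = rho].
Proof.
move=> /psd_spectral[P [d [PPadj PadjP BE d_ge0]]].
pose e : 'rV[C]_n := \row_j (d 0 j == 0)%:R.
exists (adjmx P *m diag_mx e *m P); split.
- by rewrite /herm !adjmxM adjmxK adjmx_diag ?mulmxA // => j; rewrite mxE rmorph_nat.
- have ed0 : diag_mx e *m diag_mx d = 0.
    apply/matrixP=> a b; rewrite mul_mx_diag !mxE.
    case: (a =P b) => [<-|_]; rewrite ?mulr1n ?mulr0n ?mul0r //.
    by case: (d 0 a =P 0) => [->|_]; rewrite ?mulr0 ?mul0r.
  by rewrite BE !mulmxA -(mulmxA _ P) PPadj mulmx1 -(mulmxA _ (diag_mx e)) ed0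
             mulmx0 mul0mx.
move=> rho psd_rho; rewrite mxtrace_mulC BE mxtrace_mul_spectral => hsum.
have dq0 j : d 0 j * (P *m rho *m adjmx P) j j = 0.
  apply: (psumr_eq0P _ hsum) => // k _; apply: mulr_ge0 => //.
  by rewrite -quad_adj_delta; case: psd_rho.
rewrite !mulmxA; suff -> : rho *m adjmx P *m diag_mx e = rho *m adjmx P.
  by rewrite -mulmxA PadjP mulmx1.
apply/matrixP=> a b; rewrite mul_mx_diag !mxE.
case: eqP => [_|db]; first by rewrite mulr1.
move/eqP: (dq0 b); rewrite mulf_eq0 => /orP[/eqP//|/eqP].
rewrite -quad_adj_delta => /(psd_quad_eq0 psd_rho).
by rewrite mulmxA -colE => /matrixP/(_ a 0); rewrite !mxE => ->; rewrite mul0r.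
Qed.

Lemma hipD n (X Y Z : 'M[C]_n) : hip (X + Y) Z = hip X Z + hip Y Z.
Proof. by rewrite /hip adjmxD mulmxDl mxtraceD; case: (\tr _) => ? ?; case: (\tr _). Qed.

Lemma hip0 n (Z : 'M[C]_n) : hip 0 Z = 0.
Proof. by rewrite /hip adjmx0 mul0mx mxtrace0. Qed.

Lemma hipZ n (c : R) (X Z : 'M[C]_n) : hip (c%:C%C *: X) Z = c * hip X Z.
Proof.
rewrite /hip adjmxZ -scalemxAl mxtraceZ.
by case: (\tr _) => ? ? /=; rewrite mul0r subr0.
Qed.

Lemma hip_sum n (I : Type) (r : seq I) (P : pred I) (F : I -> 'M[C]_n) Z :
  hip (\sum_(i <- r | P i) F i) Z = \sum_(i <- r | P i) hip (F i) Z.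
Proof. exact: (big_morph (fun X => hip X Z) (fun X Y => hipD X Y Z) (hip0 Z)). Qed.

Lemma hip_hermE n (X Z : 'M[C]_n) : herm X -> hip X Z = complex.Re (\tr (X *m Z)).
Proof. by rewrite /hip => ->. Qed.

Lemma mxtrace_psd_mulE n (A B : 'M[C]_n) :
  psd A -> psd B -> \tr (A *m B) = (hip A B)%:C%C.
Proof.
move=> psdA psdB; rewrite hip_hermE; last by case: psdA.
by case: (\tr _) (mxtrace_psd_mul_ge0 psdA psdB) => a b; rewrite lecE => /andP[/eqP/= ->].
Qed.

Lemma hip_psd_ge0 n (A B : 'M[C]_n) : psd A -> psd B -> 0 <= hip A B.
Proof.
move=> psdA psdB; have := mxtrace_psd_mul_ge0 psdA psdB.
by rewrite mxtrace_psd_mulE // lecE => /andP[].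
Qed.

Lemma ehpair_compress n (A B Q rho : 'M[C]_n) :
  herm A -> psd B -> herm Q ->
  (forall rho, psd rho -> \tr (B *m rho) = 0 -> rho *m Q = rho) -> psd rho ->
  ehpair (Q *m A *m Q) B rho = ehpair A B rho.
Proof.
move=> hA psdB hQ Q_fix psd_rho; rewrite /ehpair.
have := hip_psd_ge0 psdB psd_rho; rewrite le_eqVlt => /orP[/eqP/esym hB0 | hB_gt0].
  have rhoQ : rho *m Q = rho by apply: Q_fix; rewrite // mxtrace_psd_mulE // hB0.
  have Qrho : Q *m rho = rho.
    by case: psd_rho => hrho _; rewrite -hQ -[in LHS]hrho -adjmxM rhoQ.
  rewrite (hip_hermE _ (herm_compress hQ hA)) (hip_hermE _ hA).
  by rewrite -mulmxA Qrho -mulmxA mxtrace_mulC -mulmxA rhoQ.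
by rewrite !gt0_mulNye ?lte_fin // !addeNy.
Qed.

End ExtendedHermitian.

Theorem lemmaA1 (R : realType) (n m : nat)
  (As : 'I_m -> 'M[R[i]]_n) (alpha : 'I_m -> \bar R)
  (l : 'M[R[i]]_n -> \bar R) :
  (forall i, psd (As i)) ->
  (forall i, alpha i != +oo%E) ->
  ext_linear l ->
  (forall rho : 'M[R[i]]_n, dens rho ->
     l rho = (\sum_(i < m) (hip (As i) rho)%:E * alpha i)%E) ->
  exists A B : 'M[R[i]]_n,
    [/\ herm A, psd B, A *m B = 0 &
        forall rho : 'M[R[i]]_n, dens rho -> l rho = ehpair A B rho].
Proof.
move=> psdA alpha_fin _ l_dens.
(* As [fine -oo = 0], only the finite weights contribute to A0. *)
pose A0 := \sum_i (fine (alpha i))%:C%C *: As i.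
pose B0 := \sum_(i | alpha i == -oo%E) As i.
have hermA0 : herm A0 by apply: herm_sum => i _; apply/hermZ/(psdA i).1.
have psdB0 : psd B0 by apply: psd_sum.
have [Q [hermQ QB0 Q_fix]] := psd_kernel_projector psdB0.
exists (Q *m A0 *m Q), B0; split => //.
- exact: herm_compress.
- by rewrite -mulmxA QB0 mulmx0.
move=> rho /[dup] /l_dens -> [psd_rho _]; rewrite ehpair_compress //.
have /= -> := sum_mule_fineNy (h := fun i => hip (As i) rho)
  (fun i => hip_psd_ge0 (psdA i) psd_rho) alpha_fin.
by rewrite /ehpair !hip_sum; congr ((_)%:E + _)%E; apply: eq_bigr => i _; rewrite hipZ.
Qed.
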